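(* For all integers $1\le k\le n$, \[ \mathbb{P}_n(S_k)=\frac{1}{2}\left(1-\frac{k-1}{n}\right), \] i.e. the probability that the $k$-th boundary step of a uniformly random type-B permutation tableau of size $n$ is a south step equals $\frac12\bigl(1-\frac{k-1}{n}\bigr)$.
   Context: A Ferrers diagram is a left-justified array of cells whose row lengths weakly decrease from top to bottom (rows of length $0$ are allowed). Its half-perimeter is the number of rows plus the number of columns. Its southeast boundary, traversed from the northeast corner to the southwest corner, consists of $n$ unit steps, each south or west; south steps correspond to rows and west steps to columns. We write $S_k$ (resp. $W_k$) for the event that the $k$-th step is south (resp. west). If the diagram has $c$ columns, the shifted Ferrers diagram is obtained by inserting $c$ new left-justified rows above it, of lengths $c,c-1,\dots,1$ from top to bottom; the rightmost cell of each inserted row is a diagonal cell. A type-B permutation tableau of size $n$ is a filling of a shifted Ferrers diagram of half-perimeter $n$ with $0$'s and $1$'s such that: (1) every column contains at least one $1$; (2) no $0$ has both a $1$ above it in its column and a $1$ to its left in its row; (3) if a diagonal cell contains $0$ then every cell of its row contains $0$. The boundary steps of the shifted diagram are those of the underlying Ferrers diagram. Let $\mathcal{B}_n$ be the set of such tableaux, and $\mathbb{P}_n$ the uniform probability measure on $\mathcal{B}_n$. *)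

From mathcomp Require Import all_boot all_order all_algebra.
Set Implicit Arguments. Unset Strict Implicit. Unset Printing Implicit Defensive.

(* A Ferrers diagram of half-perimeter n is encoded by its southeast boundary
   word w : n.-tuple bool, read from the NE corner to the SW corner,
   true = South step (a row), false = West step (a column).
   Rows are numbered 0.. top to bottom, columns 0.. left to right. *)

Definition ncols (w : seq bool) : nat := count negb w.

Definition south_pos (w : seq bool) (i : nat) : nat :=
  nth 0 [seq p <- iota 0 (size w) | nth false w p] i.

Definition rowlen (w : seq bool) (i : nat) : nat :=
  count negb (drop (south_pos w i).+1 w).

(* Shifted Ferrers diagram: rows 0..c-1 are the inserted left-justified
   staircase rows (row r has cells in columns 0..r, its rightmost cell
   (r,r) being the diagonal cell, so each column j has c-j staircase cells
   with the diagonal cell on top); row c+i is row i of the Ferrers diagram. *)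
Definition inshift (w : seq bool) (r j : nat) : bool :=
  let c := ncols w in
  if r < c then j <= r else j < rowlen w (r - c).

Definition isdiag (w : seq bool) (r j : nat) : bool :=
  let c := ncols w in (r < c) && (j == r).

Definition tabT (n : nat) : finType :=
  (n.-tuple bool * {ffun 'I_n * 'I_n -> bool})%type.

(* A filling f (cells of the n x n grid; cells outside the shifted diagram
   must hold 0) is a type-B permutation tableau of shape w. *)
Definition is_tabB (n : nat) (t : tabT n) : bool :=
  let w := val t.1 in
  let f := t.2 in
  [&& [forall r : 'I_n, forall j : 'I_n, ~~ inshift w r j ==> ~~ f (r, j)],
      [forall j : 'I_n, (j < ncols w) ==> [exists r : 'I_n, f (r, j)]],
      [forall r : 'I_n, forall j : 'I_n,
         (inshift w r j && ~~ f (r, j)) ==>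
         ~~ ([exists r' : 'I_n, (r' < r) && f (r', j)] &&
             [exists j' : 'I_n, (j' < j) && f (r, j')])] &
      [forall r : 'I_n, forall j : 'I_n,
         (isdiag w r j && ~~ f (r, j)) ==> [forall j' : 'I_n, ~~ f (r, j')]]].

Definition tabB (n : nat) : {set tabT n} := [set t | is_tabB t].

Definition probB (n : nat) (E : pred (tabT n)) : rat :=
  (#|[set t in tabB n | E t]|%:R / #|tabB n|%:R)%R.

Definition S_event (n k : nat) : pred (tabT n) :=
  fun t => nth false (val t.1) k.-1.

From mathcomp Require Import all_boot all_order all_algebra.
From mathcomp Require Import zify ring.
Set Implicit Arguments. Unset Strict Implicit. Unset Printing Implicit Defensive.

(* For a boundary word w and a type-B tableau T of shape w,
   call a row of the shifted diagram free when none of its 0's has a 1 above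
   it and, for a staircase row, its diagonal cell holds a 1: these are the
   rows that may receive a 1 when a new first column is added.  Let
   G_w(x) = \sum_T x^(number of free rows of T).  Growing w at its southwest
   end gives two recursions:
   - appending S adds an empty, free bottom row:  G_(wS)(x) = x G_w(x);
   - appending W adds a new first column and a new top staircase row;
     summing over the fillings of that column gives
     G_(wS)(x) + G_(wW)(x) = 2x G_w(x+1).
   Summing over all words of length m therefore yields
   \sum_w G_w(x) = 2^m x(x+1)...(x+m-1), and a variant keeping track of the
   letter in position p gives the weighted count of words whose (p+1)-th step
   is S.  Setting x = 1 gives |B_n| = 2^n n! and
   #{T in B_n | S_k} = 2^(n-1) (n-1)! (n-k+1), whence the theorem. *)

Lemma forall_ord0 n (P : pred 'I_n.+1) :
  [forall i, P i] = P ord0 && [forall i : 'I_n, P (lift ord0 i)].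
Proof.
apply/forallP/andP => [H|[H0 /forallP H]]; first by split => //; apply/forallP.
by move=> i; case: (unliftP ord0 i) => [j ->|->].
Qed.

Lemma exists_ord0 n (P : pred 'I_n.+1) :
  [exists i, P i] = P ord0 || [exists i : 'I_n, P (lift ord0 i)].
Proof.
apply/existsP/orP => [[i]|[H|/existsP[i H]]]; last by exists (lift ord0 i).
  by case: (unliftP ord0 i) => [j ->|->]; [right; apply/existsP; exists j|left].
by exists ord0.
Qed.

Lemma forall_ord_max n (P : pred 'I_n.+1) :
  [forall i, P i] = P ord_max && [forall i : 'I_n, P (lift ord_max i)].
Proof.
apply/forallP/andP => [H|[H0 /forallP H]]; first by split => //; apply/forallP.
by move=> i; case: (unliftP ord_max i) => [j ->|->].
Qed.

Lemma exists_ord_max n (P : pred 'I_n.+1) :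
  [exists i, P i] = P ord_max || [exists i : 'I_n, P (lift ord_max i)].
Proof.
apply/existsP/orP => [[i]|[H|/existsP[i H]]]; last by exists (lift ord_max i).
  by case: (unliftP ord_max i) => [j ->|->]; [right; apply/existsP; exists j|left].
by exists ord_max.
Qed.

Lemma exists_lt_ord0 n (P : pred 'I_n.+1) :
  [exists i : 'I_n.+1, (i < @ord0 n) && P i] = false.
Proof. by apply/existsP => -[i]; rewrite ltn0. Qed.

Lemma forall_andb (I : finType) (P Q : pred I) :
  [forall i, P i && Q i] = [forall i, P i] && [forall i, Q i].
Proof.
apply/forallP/andP => [H|[/forallP H1 /forallP H2] i]; last by rewrite H1 H2.
by split; apply/forallP => i; case/andP: (H i).
Qed.

Lemma forall_implyb_andb (I : finType) (c P Q : pred I) :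
  [forall i, c i ==> (P i && Q i)] =
  [forall i, c i ==> P i] && [forall i, c i ==> Q i].
Proof.
apply/forallP/andP => [H|[/forallP H1 /forallP H2] i].
  by split; apply/forallP => i; case/boolP: (c i) (H i) => //= _ /andP[].
by case/boolP: (c i) (H1 i) (H2 i) => //= _ -> ->.
Qed.

Lemma forall_split_or (I J : finType) (P EA EL : I -> J -> bool) (cl : pred I) :
  [forall i, forall j, P i j ==> ~~ (EA i j && (cl i || EL i j))] =
  [forall i, forall j, P i j ==> ~~ (EA i j && EL i j)] &&
  [forall i, cl i ==> [forall j, P i j ==> ~~ EA i j]].
Proof.
apply/idP/andP => [/forallP H|[/forallP H1 /forallP H2]].
  split; apply/forallP => i; have /forallP Hi := H i.
    apply/forallP => j; apply/implyP => Pij; have := implyP (Hi j) Pij.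
    by apply: contra => /andP[-> ->]; rewrite orbT.
  apply/implyP => ci; apply/forallP => j; apply/implyP => Pij.
  by have := implyP (Hi j) Pij; rewrite ci andbT.
apply/forallP => i; apply/forallP => j; apply/implyP => Pij.
have h1 := implyP (forallP (H1 i) j) Pij.
case: (boolP (cl i)) => ci //=.
have h2 := implyP (forallP (implyP (H2 i) ci) j) Pij.
by apply: contra h2 => /andP[].
Qed.

Lemma sum_tuple_rcons m (F : seq bool -> nat) :
  \sum_(v : m.+1.-tuple bool) F v =
  \sum_(v : m.-tuple bool) (F (rcons v true) + F (rcons v false)).
Proof.
have hinj : injective (fun p : m.-tuple bool * bool => [tuple of rcons p.1 p.2]).
  by move=> [a b] [c d] /(congr1 val) /= /rcons_inj [/val_inj -> ->].
rewrite (reindex _ (onW_bij _ (inj_card_bij hinj _))); last first.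
  by rewrite card_prod !card_tuple card_bool expnS mulnC.
transitivity (\sum_(v : m.-tuple bool) \sum_(b : bool) F (rcons v b)).
  by rewrite pair_big.
by apply: eq_bigr => v _; rewrite big_bool.
Qed.

Definition fcons n (b : bool) (c : {ffun 'I_n -> bool}) : {ffun 'I_n.+1 -> bool} :=
  [ffun i => if unlift ord0 i is Some j then c j else b].

Lemma fcons_ord0 n b (c : {ffun 'I_n -> bool}) : fcons b c ord0 = b.
Proof. by rewrite ffunE unlift_none. Qed.

Lemma fcons_lift n b (c : {ffun 'I_n -> bool}) i : fcons b c (lift ord0 i) = c i.
Proof. by rewrite ffunE liftK. Qed.

Lemma sum_ffun_fcons n (F : {ffun 'I_n.+1 -> bool} -> nat) :
  \sum_(c : {ffun 'I_n.+1 -> bool}) F c =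
  \sum_(b : bool) \sum_(c : {ffun 'I_n -> bool}) F (fcons b c).
Proof.
have hinj : injective (fun p : bool * {ffun 'I_n -> bool} => fcons p.1 p.2).
  move=> [a b] [c d] /= E; have := congr1 (fun f : {ffun _ -> bool} => f ord0) E.
  rewrite !fcons_ord0 => ->; congr pair; apply/ffunP => i.
  by have := congr1 (fun f : {ffun _ -> bool} => f (lift ord0 i)) E; rewrite !fcons_lift.
rewrite (reindex _ (onW_bij _ (inj_card_bij hinj _))); last first.
  by rewrite card_prod !card_ffun card_bool !card_ord expnS.
by rewrite pair_big /=.
Qed.

Definition south_list (w : seq bool) : seq nat :=
  [seq p <- iota 0 (size w) | nth false w p].

Lemma south_posE w i : south_pos w i = nth 0 (south_list w) i.
Proof. by []. Qed.

Lemma south_list_rcons w b :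
  south_list (rcons w b) = south_list w ++ (if b then [:: size w] else [::]).
Proof.
rewrite /south_list size_rcons -addn1 iotaD filter_cat /= nth_rcons ltnn eqxx.
rewrite add0n; congr (_ ++ _).
by apply: eq_in_filter => p; rewrite mem_iota /= => Hp; rewrite nth_rcons Hp.
Qed.

Lemma ncols_rcons w b : ncols (rcons w b) = ncols w + ~~ b.
Proof. by rewrite /ncols -cats1 count_cat /= addn0. Qed.

Lemma size_ncols_rows w : size w = ncols w + size (south_list w).
Proof.
elim/last_ind: w => [//|w b IH].
rewrite south_list_rcons ncols_rcons size_cat size_rcons IH.
by case: b => /=; rewrite ?addn0 ?addn1 ?addnS ?addSn.
Qed.

Lemma ncols_le_size w : ncols w <= size w.
Proof. by rewrite size_ncols_rows leq_addr. Qed.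

Lemma south_pos_lt w i : i < size (south_list w) -> south_pos w i < size w.
Proof.
move=> Hi; have : south_pos w i \in south_list w by rewrite south_posE mem_nth.
by rewrite mem_filter mem_iota /= => /andP[_ ->].
Qed.

Lemma south_pos_rcons w b i :
  i < size (south_list w) -> south_pos (rcons w b) i = south_pos w i.
Proof. by move=> Hi; rewrite !south_posE south_list_rcons nth_cat Hi. Qed.

Lemma rowlen_rcons w b i :
  i < size (south_list w) -> rowlen (rcons w b) i = rowlen w i + ~~ b.
Proof.
move=> Hi; rewrite /rowlen south_pos_rcons // drop_rcons ?south_pos_lt //.
by rewrite -cats1 count_cat /= addn0.
Qed.

Lemma rowlen_last_row w : rowlen (rcons w true) (size (south_list w)) = 0.
Proof.
rewrite /rowlen south_posE south_list_rcons nth_cat ltnn subnn /=.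
by rewrite drop_oversize // size_rcons.
Qed.

Lemma rowlen_le_ncols w i : rowlen w i <= ncols w.
Proof.
rewrite /rowlen /ncols -[in X in _ <= X](cat_take_drop (south_pos w i).+1 w).
by rewrite count_cat leq_addl.
Qed.

Lemma inshift_lt_ncols w r j : inshift w r j -> j < ncols w.
Proof.
rewrite /inshift; case: ifP => [Hr Hj|_ Hj]; first exact: leq_ltn_trans Hj Hr.
exact: leq_trans Hj (rowlen_le_ncols _ _).
Qed.

(* Appending a west step shifts the shifted diagram one step down and right,
   adding a new staircase row 0 = [(0,0)] and a full new column 0. *)
Lemma inshift_west_shift w r j :
  r < size w -> inshift (rcons w false) r.+1 j.+1 = inshift w r j.
Proof.
move=> Hr; rewrite /inshift ncols_rcons addn1 ltnS.
case: ifP => // Hc; rewrite subSS rowlen_rcons ?addn1 //.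
by have := size_ncols_rows w; lia.
Qed.

Lemma inshift_west_col0 w r : r <= size w -> inshift (rcons w false) r 0.
Proof.
move=> Hr; rewrite /inshift ncols_rcons addn1.
case: ifP => // Hc; rewrite rowlen_rcons ?addn1 //.
by have := size_ncols_rows w; lia.
Qed.

Lemma inshift_west_row0 w j : inshift (rcons w false) 0 j.+1 = false.
Proof. by rewrite /inshift ncols_rcons addn1. Qed.

Lemma isdiag_west_shift w r j : isdiag (rcons w false) r.+1 j.+1 = isdiag w r j.
Proof. by rewrite /isdiag ncols_rcons addn1 ltnS eqSS. Qed.

Lemma isdiag_west_col0 w r : isdiag (rcons w false) r 0 = (r == 0).
Proof. by rewrite /isdiag ncols_rcons addn1 eq_sym andb_idl // => /eqP ->. Qed.

Lemma isdiag_west_row0 w j : isdiag (rcons w false) 0 j.+1 = false.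
Proof. by rewrite /isdiag andbF. Qed.

Lemma inshift_south w r j :
  r < size w -> inshift (rcons w true) r j = inshift w r j.
Proof.
move=> Hr; rewrite /inshift ncols_rcons addn0.
case: ifP => // Hc; rewrite rowlen_rcons ?addn0 //.
by have := size_ncols_rows w; lia.
Qed.

Lemma inshift_south_last w j : inshift (rcons w true) (size w) j = false.
Proof.
rewrite /inshift ncols_rcons addn0 ltnNge ncols_le_size /=.
by rewrite {1}size_ncols_rows addKn rowlen_last_row.
Qed.

Lemma isdiag_south w r j : isdiag (rcons w true) r j = isdiag w r j.
Proof. by rewrite /isdiag ncols_rcons addn0. Qed.

(* A new first column is added next to a
   tableau whose free rows form the set A; its 1's may only go into free
   rows.  A free row stays free iff it receives a 1 or no 1 of the new
   column lies above it (s records a 1 already placed above the block). *)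

Definition count_rows n (A : 'I_n -> bool) : nat := \sum_(r < n) A r.

Definition still_free n (s : bool) (A : 'I_n -> bool) (c : {ffun 'I_n -> bool}) : nat :=
  \sum_(r < n) ((~~ c r ==> ~~ (s || [exists r' : 'I_n, (r' < r) && c r'])) && A r).

Definition colsum n (s : bool) (A : 'I_n -> bool) (x : nat) : nat :=
  \sum_(c : {ffun 'I_n -> bool} | [forall r, c r ==> A r]) x ^ still_free s A c.

Lemma count_rows_lift n (A : 'I_n.+1 -> bool) :
  count_rows A = A ord0 + count_rows (fun r => A (lift ord0 r)).
Proof. by rewrite /count_rows big_ord_recl. Qed.

Lemma still_free_fcons n s (A : 'I_n.+1 -> bool) b c :
  still_free s A (fcons b c) =
  ((~~ b ==> ~~ s) && A ord0) + still_free (s || b) (fun r => A (lift ord0 r)) c.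
Proof.
rewrite /still_free big_ord_recl fcons_ord0 exists_lt_ord0 orbF; congr (_ + _).
apply: eq_bigr => r _; rewrite fcons_lift exists_ord0 fcons_ord0 lift0 /= -orbA.
by congr (_ && _); congr (_ ==> ~~ [|| _, _ | _]); apply: eq_existsb => i; rewrite fcons_lift.
Qed.

Lemma colsum_rec n s (A : 'I_n.+1 -> bool) x :
  colsum s A x = \sum_(b : bool)
    ((b ==> A ord0) * x ^ ((~~ b ==> ~~ s) && A ord0) *
       colsum (s || b) (fun r => A (lift ord0 r)) x).
Proof.
rewrite /colsum big_mkcond sum_ffun_fcons; apply: eq_bigr => b _.
rewrite big_distrr /= [RHS]big_mkcond; apply: eq_bigr => c _.
rewrite forall_ord0 fcons_ord0 still_free_fcons expnD.
have -> : [forall i : 'I_n, fcons b c (lift ord0 i) ==> A (lift ord0 i)] =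
          [forall i, c i ==> A (lift ord0 i)].
  by apply: eq_forallb => i; rewrite fcons_lift.
by case: (b ==> A ord0); case: [forall _, _]; rewrite /= ?mul1n ?muln0 ?mul0n.
Qed.

Lemma colsum_empty s (A : 'I_0 -> bool) x : colsum s A x = 1.
Proof.
rewrite /colsum (big_pred1 [ffun => false]); first by rewrite /still_free big_ord0.
move=> c; apply/idP/eqP => [_|->]; last by apply/forallP => -[].
by apply/ffunP => -[].
Qed.

(* Once a 1 lies above the block, a row stays free iff it receives a 1. *)
Lemma colsum_true n (A : 'I_n -> bool) x : colsum true A x = x.+1 ^ count_rows A.
Proof.
elim: n A => [|n IH] A; first by rewrite colsum_empty /count_rows big_ord0.
rewrite colsum_rec big_bool /= !IH count_rows_lift.
case: (A ord0) => /=; rewrite ?mul1n ?mul0n ?add0n ?expn1 ?expn0 ?mul1n //.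
by rewrite add1n expnS mulSn addnC.
Qed.

Lemma colsum_false n (A : 'I_n -> bool) x :
  colsum false A x + x ^ (count_rows A).+1 = x * x.+1 ^ count_rows A + x ^ count_rows A.
Proof.
elim: n A => [|n IH] A.
  by rewrite colsum_empty /count_rows big_ord0 expn0 expn1 muln1 addnC.
rewrite colsum_rec big_bool /= colsum_true count_rows_lift.
move: (IH (fun r => A (lift ord0 r))); case: (A ord0) => /= H.
  rewrite !mul1n expn1 add1n -addnA [x * _ + _]addnC -mulnDr H !expnS; nia.
by rewrite mul0n !add0n expn0 !mul1n H.
Qed.

Lemma colsum_false_nonempty n (A : 'I_n -> bool) x :
  colsum false A x =
  \sum_(c : {ffun 'I_n -> bool} | [exists i, c i] && [forall r, c r ==> A r])
     x ^ still_free false A c + x ^ count_rows A.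
Proof.
rewrite /colsum (bigID (fun c : {ffun 'I_n -> bool} => [exists i, c i])) /=.
congr (_ + _); first by apply: eq_bigl => c; rewrite andbC.
rewrite (big_pred1 [ffun => false]).
  rewrite /still_free /count_rows; congr (_ ^ _); apply: eq_bigr => r _.
  rewrite ffunE /=; suff -> : [exists r' : 'I_n, (r' < r) &&
      ([ffun=> false] : {ffun 'I_n -> bool}) r'] = false by [].
  by apply/existsP => -[i]; rewrite ffunE andbF.
move=> c; apply/andP/eqP => [[_ /existsPn H]|->].
  by apply/ffunP => i; rewrite ffunE; apply/negbTE.
split; first by apply/forallP => i; rewrite ffunE.
by apply/existsPn => i; rewrite ffunE.
Qed.

(* The new column also meets a new top row 0 whose only cell is diagonal;
   the column must contain a 1, its old-row 1's must go to free rows, and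
   row 0 is free iff its diagonal cell is 1. *)
Definition new_col_ok n (A : 'I_n -> bool) (col : {ffun 'I_n.+1 -> bool}) : bool :=
  [exists i, col i] && [forall r : 'I_n, col (lift ord0 r) ==> A r].

Definition new_col_free n (A : 'I_n -> bool) (col : {ffun 'I_n.+1 -> bool}) : nat :=
  col ord0 + \sum_(r < n) ((~~ col (lift ord0 r) ==>
     ~~ [exists r' : 'I_n.+1, (r' < lift ord0 r) && col r']) && A r).

Lemma new_col_free_fcons n (A : 'I_n -> bool) b c :
  new_col_free A (fcons b c) = b + still_free b A c.
Proof.
rewrite /new_col_free fcons_ord0 /still_free; congr (_ + _); apply: eq_bigr => r _.
rewrite fcons_lift exists_ord0 fcons_ord0 lift0 /=; congr (_ && _).
congr (_ ==> ~~ (_ || _)); apply: eq_existsb => i.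
by rewrite fcons_lift /bump leq0n add1n ltnS.
Qed.

Lemma new_col_ok_fcons n (A : 'I_n -> bool) b c :
  new_col_ok A (fcons b c) = (b || [exists i, c i]) && [forall r, c r ==> A r].
Proof.
rewrite /new_col_ok exists_ord0 fcons_ord0.
rewrite (eq_existsb (fcons_lift b c)); congr (_ && _).
by apply: eq_forallb => r; rewrite fcons_lift.
Qed.

(* The column-filling identity: for one tableau of shape w with free-row set
   A, its contribution to G_(wW)(x) + x G_w(x) is 2x (x+1)^|A|. *)
Lemma new_col_sum n (A : 'I_n -> bool) x :
  \sum_(col | new_col_ok A col) x ^ new_col_free A col + x ^ (count_rows A).+1 =
  2 * x * x.+1 ^ count_rows A.
Proof.
rewrite big_mkcond sum_ffun_fcons big_bool /=.
have -> : \sum_(c : {ffun 'I_n -> bool})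
    (if new_col_ok A (fcons true c) then x ^ new_col_free A (fcons true c) else 0)
    = x * colsum true A x.
  rewrite /colsum big_distrr /= [RHS]big_mkcond; apply: eq_bigr => c _.
  by rewrite new_col_ok_fcons new_col_free_fcons expnS; case: [forall _, _].
have -> : \sum_(c : {ffun 'I_n -> bool})
    (if new_col_ok A (fcons false c) then x ^ new_col_free A (fcons false c) else 0)
    = \sum_(c : {ffun 'I_n -> bool} | [exists i, c i] && [forall r, c r ==> A r])
        x ^ still_free false A c.
  rewrite [RHS]big_mkcond; apply: eq_bigr => c _.
  by rewrite new_col_ok_fcons new_col_free_fcons add0n.
have := colsum_false A x; rewrite colsum_true colsum_false_nonempty; lia.
Qed.

Section Tableaux.
Variable n : nat.
Implicit Types (w : seq bool) (f : {ffun 'I_n * 'I_n -> bool}).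

Definition supported w f :=
  [forall r : 'I_n, forall j : 'I_n, ~~ inshift w r j ==> ~~ f (r, j)].
Definition cols_filled w f :=
  [forall j : 'I_n, (j < ncols w) ==> [exists r : 'I_n, f (r, j)]].
Definition le_condition w f := [forall r : 'I_n, forall j : 'I_n,
  (inshift w r j && ~~ f (r, j)) ==>
  ~~ ([exists r' : 'I_n, (r' < r) && f (r', j)] &&
      [exists j' : 'I_n, (j' < j) && f (r, j')])].
Definition diag_condition w f := [forall r : 'I_n, forall j : 'I_n,
  (isdiag w r j && ~~ f (r, j)) ==> [forall j' : 'I_n, ~~ f (r, j')]].
Definition is_tab w f :=
  [&& supported w f, cols_filled w f, le_condition w f & diag_condition w f].

Definition unblocked w f (r : 'I_n) := [forall j : 'I_n,
  (inshift w r j && ~~ f (r, j)) ==> ~~ [exists r' : 'I_n, (r' < r) && f (r', j)]].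
(* Row r may receive a 1 in a new first column. *)
Definition free_row w f (r : 'I_n) := unblocked w f r && ((r < ncols w) ==> f (r, r)).
Definition nfree w f := \sum_(r < n) free_row w f r.
Definition genfun w x := \sum_(f : {ffun 'I_n * 'I_n -> bool} | is_tab w f) x ^ nfree w f.

End Tableaux.

(* Appending a south step: a tableau of shape wS is one of shape w with an
   empty bottom row (and empty last column), which is always free. *)
Section SouthStep.
Variables (n : nat) (w : seq bool).
Hypothesis size_w : size w = n.
Let wS := rcons w true.

Definition ext_south (f : {ffun 'I_n * 'I_n -> bool}) : {ffun 'I_n.+1 * 'I_n.+1 -> bool} :=
  [ffun p => match unlift ord_max p.1, unlift ord_max p.2 with
             | Some r, Some j => f (r, j) | _, _ => false end].

Definition res_south (f' : {ffun 'I_n.+1 * 'I_n.+1 -> bool}) : {ffun 'I_n * 'I_n -> bool} :=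
  [ffun p => f' (lift ord_max p.1, lift ord_max p.2)].

Lemma ext_south_old f r j : ext_south f (lift ord_max r, lift ord_max j) = f (r, j).
Proof. by rewrite ffunE /= !liftK. Qed.
Lemma ext_south_row f j : ext_south f (ord_max, j) = false.
Proof. by rewrite ffunE /= unlift_none. Qed.
Lemma ext_south_col f r : ext_south f (r, ord_max) = false.
Proof. by rewrite ffunE /= unlift_none; case: unlift. Qed.

Lemma inshS_old (r j : 'I_n) :
  inshift wS (lift ord_max r) (lift ord_max j) = inshift w r j.
Proof. by rewrite !lift_max inshift_south // size_w. Qed.
Lemma inshS_row (j : 'I_n.+1) : inshift wS (@ord_max n) j = false.
Proof.
have -> : (@ord_max n : nat) = size w by rewrite size_w.
exact: inshift_south_last.
Qed.
Lemma inshS_col (r : 'I_n.+1) : inshift wS r (@ord_max n) = false.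
Proof.
apply/negP => /inshift_lt_ncols; rewrite /wS ncols_rcons addn0 /=.
by have := ncols_le_size w; rewrite size_w; lia.
Qed.
Lemma ncolsS_lt (r : 'I_n) : (lift ord_max r < ncols wS) = (r < ncols w).
Proof. by rewrite /wS ncols_rcons addn0 lift_max. Qed.
Lemma ncolsS_max : (@ord_max n < ncols wS) = false.
Proof.
by rewrite /wS ncols_rcons addn0 /=; have := ncols_le_size w; rewrite size_w; lia.
Qed.
Lemma isdS_old (r j : 'I_n) :
  isdiag wS (lift ord_max r) (lift ord_max j) = isdiag w r j.
Proof. by rewrite !lift_max isdiag_south. Qed.
Lemma isdS_row (j : 'I_n.+1) : isdiag wS (@ord_max n) j = false.
Proof. by rewrite /isdiag ncolsS_max. Qed.
Lemma isdS_col (r : 'I_n) : isdiag wS (lift ord_max r) (@ord_max n) = false.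
Proof. by rewrite /isdiag lift_max /= gtn_eqF ?andbF. Qed.

Lemma ext_south_above f (r j : 'I_n) :
  [exists r' : 'I_n.+1, (r' < lift ord_max r) && ext_south f (r', lift ord_max j)] =
  [exists r' : 'I_n, (r' < r) && f (r', j)].
Proof.
rewrite exists_ord_max ext_south_row andbF orFb.
by apply: eq_existsb => i; rewrite ext_south_old !lift_max.
Qed.
Lemma ext_south_left f (r j : 'I_n) :
  [exists j' : 'I_n.+1, (j' < lift ord_max j) && ext_south f (lift ord_max r, j')] =
  [exists j' : 'I_n, (j' < j) && f (r, j')].
Proof.
rewrite exists_ord_max ext_south_col andbF orFb.
by apply: eq_existsb => i; rewrite ext_south_old !lift_max.
Qed.

Lemma is_tab_south f : is_tab wS (ext_south f) = is_tab w f.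
Proof.
rewrite /is_tab; congr [&& _, _, _ & _].
- rewrite /supported forall_ord_max.
  rewrite (_ : [forall j, _] = true); last by apply/forallP => j; rewrite ext_south_row implybT.
  apply: eq_forallb => r; rewrite forall_ord_max ext_south_col implybT /=.
  by apply: eq_forallb => j; rewrite ext_south_old inshS_old.
- rewrite /cols_filled forall_ord_max ncolsS_max andTb; apply: eq_forallb => j.
  rewrite ncolsS_lt exists_ord_max ext_south_row /=.
  by congr (_ ==> _); apply: eq_existsb => i; rewrite ext_south_old.
- rewrite /le_condition forall_ord_max.
  rewrite (_ : [forall j, _] = true); last by apply/forallP => j; rewrite inshS_row.
  apply: eq_forallb => r; rewrite forall_ord_max inshS_col /=.
  by apply: eq_forallb => j; rewrite inshS_old ext_south_old ext_south_above ext_south_left.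
- rewrite /diag_condition forall_ord_max.
  rewrite (_ : [forall j, _] = true); last by apply/forallP => j; rewrite isdS_row.
  apply: eq_forallb => r; rewrite forall_ord_max isdS_col /=.
  apply: eq_forallb => j; rewrite isdS_old ext_south_old; congr (_ ==> _).
  by rewrite forall_ord_max ext_south_col /=; apply: eq_forallb => i; rewrite ext_south_old.
Qed.

Lemma nfree_south f : nfree wS (ext_south f) = (nfree w f).+1.
Proof.
rewrite /nfree big_ord_recr -[(\sum_(r < n) free_row w f r).+1]addn1; congr (_ + _); last first.
  rewrite /free_row /unblocked ncolsS_max andbT (_ : [forall j, _] = true) //.
  by apply/forallP => j; rewrite inshS_row.
apply: eq_bigr => r _.
have -> : widen_ord (leqnSn n) r = lift ord_max r by apply: ord_inj; rewrite lift_max.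
rewrite /free_row /unblocked ncolsS_lt ext_south_old; congr (_ && _).
rewrite forall_ord_max inshS_col andFb implyFb andTb; apply: eq_forallb => j.
by rewrite inshS_old ext_south_old ext_south_above.
Qed.

(* Every filling of shape wS is an extension, since it vanishes outside the
   diagram. *)
Lemma ext_south_onto f' : is_tab wS f' -> ext_south (res_south f') = f'.
Proof.
case/and4P => /forallP supp _ _ _; apply/ffunP => -[r j]; rewrite ffunE /=.
case: (unliftP ord_max r) => [r0 ->|->]; last first.
  by apply/esym/negbTE; have := forallP (supp ord_max) j; rewrite inshS_row.
case: (unliftP ord_max j) => [j0 ->|->]; first by rewrite ?liftK ffunE.
rewrite ?unlift_none; apply/esym/negbTE.
by have := forallP (supp (lift ord_max r0)) ord_max; rewrite inshS_col.
Qed.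

Lemma genfun_south x : genfun n.+1 wS x = x * genfun n w x.
Proof.
rewrite /genfun big_distrr /= (reindex ext_south); last first.
  exists res_south.
    by move=> f _; apply/ffunP => -[r j]; rewrite ffunE ext_south_old.
  by move=> f'; rewrite inE => /ext_south_onto.
apply: eq_big => [f|f _]; first by rewrite is_tab_south.
by rewrite nfree_south expnS.
Qed.

End SouthStep.

(* Appending a west step: a tableau of shape wW is a tableau f of shape w,
   shifted one step down and right, together with a new first column c whose
   top cell c ord0 is the diagonal cell of the new staircase row 0. *)
Section WestStep.
Variables (n : nat) (w : seq bool).
Hypothesis size_w : size w = n.
Let wW := rcons w false.

Definition ext_west (p : {ffun 'I_n * 'I_n -> bool} * {ffun 'I_n.+1 -> bool}) :
  {ffun 'I_n.+1 * 'I_n.+1 -> bool} :=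
  [ffun q => match unlift ord0 q.2 with
             | None => p.2 q.1
             | Some j => if unlift ord0 q.1 is Some r then p.1 (r, j) else false end].

Definition res_west (f' : {ffun 'I_n.+1 * 'I_n.+1 -> bool}) :=
  ([ffun q : 'I_n * 'I_n => f' (lift ord0 q.1, lift ord0 q.2)], [ffun r => f' (r, ord0)]).

Lemma ext_west_old f c r j : ext_west (f, c) (lift ord0 r, lift ord0 j) = f (r, j).
Proof. by rewrite ffunE /= !liftK. Qed.
Lemma ext_west_row0 f c j : ext_west (f, c) (ord0, lift ord0 j) = false.
Proof. by rewrite ffunE /= liftK unlift_none. Qed.
Lemma ext_west_col0 f c r : ext_west (f, c) (r, ord0) = c r.
Proof. by rewrite ffunE /= unlift_none. Qed.

Lemma inshW_old (r j : 'I_n) :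
  inshift wW (lift ord0 r) (lift ord0 j) = inshift w r j.
Proof. by rewrite !lift0 inshift_west_shift // size_w. Qed.
Lemma inshW_col0 (r : 'I_n.+1) : inshift wW r (@ord0 n).
Proof. by apply: inshift_west_col0; rewrite size_w -ltnS. Qed.
Lemma inshW_row0 (j : 'I_n) : inshift wW (@ord0 n) (lift ord0 j) = false.
Proof. by rewrite lift0 inshift_west_row0. Qed.
Lemma isdW_old (r j : 'I_n) : isdiag wW (lift ord0 r) (lift ord0 j) = isdiag w r j.
Proof. by rewrite !lift0 isdiag_west_shift. Qed.
Lemma isdW_col0 (r : 'I_n) : isdiag wW (lift ord0 r) (@ord0 n) = false.
Proof. by rewrite lift0 isdiag_west_col0. Qed.
Lemma isdW_corner : isdiag wW (@ord0 n) (@ord0 n).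
Proof. by rewrite isdiag_west_col0. Qed.
Lemma isdW_row0 (j : 'I_n) : isdiag wW (@ord0 n) (lift ord0 j) = false.
Proof. by rewrite lift0 isdiag_west_row0. Qed.
Lemma ncolsW_lt (r : 'I_n) : (lift ord0 r < ncols wW) = (r < ncols w).
Proof. by rewrite /wW ncols_rcons addn1 lift0 ltnS. Qed.

Lemma ext_west_above f c (r j : 'I_n) :
  [exists r' : 'I_n.+1, (r' < lift ord0 r) && ext_west (f, c) (r', lift ord0 j)] =
  [exists r' : 'I_n, (r' < r) && f (r', j)].
Proof.
rewrite exists_ord0 ext_west_row0 andbF orFb.
by apply: eq_existsb => i; rewrite ext_west_old !lift0 ltnS.
Qed.

Lemma ext_west_left f c (r j : 'I_n) :
  [exists j' : 'I_n.+1, (j' < lift ord0 j) && ext_west (f, c) (lift ord0 r, j')] =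
  c (lift ord0 r) || [exists j' : 'I_n, (j' < j) && f (r, j')].
Proof.
rewrite exists_ord0 ext_west_col0 lift0 /=; congr (_ || _).
by apply: eq_existsb => i; rewrite ext_west_old /bump leq0n add1n ltnS.
Qed.

Lemma supported_west f c : supported wW (ext_west (f, c)) = supported w f.
Proof.
rewrite /supported forall_ord0 forall_ord0 inshW_col0 implyFb andTb.
rewrite (_ : [forall i : 'I_n, _] = true); last first.
  by apply/forallP => j; rewrite ext_west_row0 implybT.
apply: eq_forallb => r; rewrite forall_ord0 inshW_col0 implyFb andTb.
by apply: eq_forallb => j; rewrite inshW_old ext_west_old.
Qed.

Lemma cols_filled_west f c :
  cols_filled wW (ext_west (f, c)) = [exists i, c i] && cols_filled w f.
Proof.
rewrite /cols_filled forall_ord0 /wW ncols_rcons addn1; congr (_ && _).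
  by apply: eq_existsb => i; rewrite ext_west_col0.
apply: eq_forallb => j; rewrite lift0 ltnS; congr (_ ==> _).
by rewrite exists_ord0 ext_west_row0 orFb; apply: eq_existsb => i; rewrite ext_west_old.
Qed.

(* A 1 in row r of the new column forbids 0's with a 1 above them in that
   row: the row must be unblocked. *)
Lemma le_condition_west f c :
  le_condition wW (ext_west (f, c)) =
  le_condition w f && [forall r : 'I_n, c (lift ord0 r) ==> unblocked w f r].
Proof.
rewrite /le_condition forall_ord0 forall_ord0 exists_lt_ord0 andFb implybT andTb.
rewrite (_ : [forall i : 'I_n, _] = true); last first.
  by apply/forallP => j; rewrite inshW_row0.
rewrite /unblocked -forall_split_or; apply: eq_forallb => r.
rewrite forall_ord0 exists_lt_ord0 andbF implybT andTb; apply: eq_forallb => j.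
by rewrite inshW_old ext_west_old ext_west_above ext_west_left.
Qed.

(* In an old row, a 1 in the new column forbids a 0 on the diagonal cell. *)
Lemma diag_row_west f c (r : 'I_n) :
  [forall j : 'I_n, (isdiag w r j && ~~ f (r, j)) ==>
                    (~~ c (lift ord0 r) && [forall j', ~~ f (r, j')])] =
  [forall j : 'I_n, (isdiag w r j && ~~ f (r, j)) ==> [forall j', ~~ f (r, j')]] &&
  (c (lift ord0 r) ==> ((r < ncols w) ==> f (r, r))).
Proof.
case: (boolP (c (lift ord0 r))) => cr /=; last by rewrite andbT.
apply/forallP/andP => [H | [_ Hdiag] j].
  have Hrr : (r < ncols w) ==> f (r, r).
    apply/implyP => rc; apply/negPn/negP => fr.
    by have := H r; rewrite /isdiag rc eqxx fr.
  split => //; apply/forallP => j; apply/implyP => /andP[/andP[rc /eqP jr] fj].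
  have jr' : j = r by apply: ord_inj.
  by move: fj; rewrite jr' (implyP Hrr rc).
apply/implyP => /andP[/andP[rc /eqP jr] fj].
have jr' : j = r by apply: ord_inj.
by move: fj; rewrite jr' (implyP Hdiag rc).
Qed.

Lemma diag_condition_west f c :
  diag_condition wW (ext_west (f, c)) = diag_condition w f &&
    [forall r : 'I_n, c (lift ord0 r) ==> ((r < ncols w) ==> f (r, r))].
Proof.
rewrite /diag_condition forall_ord0 forall_ord0 isdW_corner ext_west_col0.
rewrite forall_ord0 ext_west_col0.
rewrite (_ : [forall i : 'I_n, ~~ ext_west _ _] = true); last first.
  by apply/forallP => j; rewrite ext_west_row0.
rewrite andbT implybb andTb.
rewrite (_ : [forall i : 'I_n, _] = true); last by apply/forallP => j; rewrite isdW_row0.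
rewrite andTb -forall_andb; apply: eq_forallb => r.
rewrite -diag_row_west forall_ord0 isdW_col0 andTb; apply: eq_forallb => j.
rewrite isdW_old ext_west_old forall_ord0 ext_west_col0; congr (_ ==> (_ && _)).
by apply: eq_forallb => j'; rewrite ext_west_old.
Qed.

Lemma is_tab_west f c :
  is_tab wW (ext_west (f, c)) = is_tab w f && new_col_ok (free_row w f) c.
Proof.
rewrite /is_tab supported_west cols_filled_west le_condition_west.
rewrite diag_condition_west /new_col_ok /free_row forall_implyb_andb.
by case: (supported w f); case: (cols_filled w f); case: (le_condition w f);
   case: (diag_condition w f); case: [exists _, _]; case: [forall _, _]; case: [forall _, _].
Qed.

(* Row 0 is free iff its diagonal cell is 1; an old row stays free iff it
   was free and either receives a 1 or has no 1 of the new column above. *)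
Lemma nfree_west f c : nfree wW (ext_west (f, c)) = new_col_free (free_row w f) c.
Proof.
rewrite /nfree big_ord_recl /new_col_free; congr (_ + _).
  rewrite /free_row /unblocked (_ : [forall j, _] = true); last first.
    by apply/forallP => j; rewrite exists_lt_ord0 implybT.
  by rewrite /wW ncols_rcons addn1 ext_west_col0.
apply: eq_bigr => r _; rewrite /free_row /unblocked forall_ord0 inshW_col0 andTb.
rewrite ext_west_col0 -!andbA; congr (_ && _).
  by congr (_ ==> ~~ _); apply: eq_existsb => i; rewrite ext_west_col0.
rewrite ncolsW_lt ext_west_old; congr (_ && _).
by apply: eq_forallb => j; rewrite inshW_old ext_west_old ext_west_above.
Qed.

(* Every filling of shape wW vanishes on row 0 outside the diagonal cell,
   hence is an extension. *)
Lemma ext_west_onto f' : is_tab wW f' -> ext_west (res_west f') = f'.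
Proof.
case/and4P => /forallP supp _ _ _; apply/ffunP => -[r j]; rewrite ffunE /=.
case: (unliftP ord0 j) => [j0 ->|->]; last by rewrite ?unlift_none ffunE.
rewrite ?liftK; case: (unliftP ord0 r) => [r0 ->|->]; first by rewrite ?liftK ffunE.
rewrite ?unlift_none; apply/esym/negbTE.
by have := forallP (supp ord0) (lift ord0 j0); rewrite inshW_row0.
Qed.

Lemma genfun_west_split x : genfun n.+1 wW x =
  \sum_(f : {ffun 'I_n * 'I_n -> bool} | is_tab w f) \sum_(c | new_col_ok (free_row w f) c)
     x ^ new_col_free (free_row w f) c.
Proof.
rewrite pair_big_dep /genfun (reindex ext_west); last first.
  exists res_west => [[f c] _|f']; last by rewrite inE => /ext_west_onto.
  by congr pair; apply/ffunP => q; rewrite ffunE ?ext_west_col0 //; case: q => r j;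
    rewrite ext_west_old.
by apply: eq_big => [[f c]|[f c] _]; rewrite ?is_tab_west ?nfree_west.
Qed.

Lemma genfun_west x : genfun n.+1 wW x + x * genfun n w x = 2 * x * genfun n w x.+1.
Proof.
rewrite genfun_west_split /genfun big_distrr -big_split /= big_distrr /=.
by apply: eq_bigr => f _; rewrite -expnS new_col_sum.
Qed.

End WestStep.

Definition gen (s : seq bool) (x : nat) : nat := genfun (size s) s x.

Lemma gen_tuple m (v : m.-tuple bool) x : gen v x = genfun m v x.
Proof. by rewrite /gen size_tuple. Qed.

Lemma gen_nil x : gen [::] x = 1.
Proof.
rewrite /gen /genfun /= (big_pred1 [ffun => false]); first by rewrite /nfree big_ord0.
move=> f; apply/idP/eqP => [_|->]; first by apply/ffunP => -[[]].
by apply/and4P; split; apply/forallP => -[].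
Qed.

Lemma gen_south s x : gen (rcons s true) x = x * gen s x.
Proof. by rewrite /gen size_rcons genfun_south. Qed.

Lemma gen_step s x : gen (rcons s true) x + gen (rcons s false) x = 2 * x * gen s x.+1.
Proof.
rewrite gen_south /gen size_rcons -(genfun_west (erefl (size s))); lia.
Qed.

Definition rising (x m : nat) : nat := \prod_(i < m) (x + i).

Lemma rising_S x m : rising x m.+1 = x * rising x.+1 m.
Proof.
rewrite /rising big_ord_recl addn0; congr (_ * _).
by apply: eq_bigr => i _; rewrite lift0 addnS addSn.
Qed.

Lemma rising1 m : rising 1 m = m`!.
Proof.
elim: m => [|m IH]; first by rewrite /rising big_ord0.
by rewrite /rising big_ord_recr /= -/(rising 1 m) IH factS mulnC add1n.
Qed.

Lemma sum_gen m x : \sum_(v : m.-tuple bool) gen v x = 2 ^ m * rising x m.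
Proof.
elim: m x => [|m IH] x.
  rewrite (big_pred1 [tuple]) ?gen_nil /rising ?big_ord0 // => v.
  by apply/idP/eqP => // _; apply: val_inj; rewrite /= (size0nil (size_tuple v)).
rewrite (sum_tuple_rcons m (gen^~ x)).
rewrite (eq_bigr (fun v : m.-tuple bool => 2 * x * gen v x.+1)); last first.
  by move=> v _; rewrite gen_step.
by rewrite -big_distrr /= IH rising_S expnS; lia.
Qed.

Definition sum_gen_south (p m x : nat) : nat :=
  \sum_(v : m.-tuple bool) nth false v p * gen v x.

Lemma sum_gen_south_later p m x :
  p < m -> sum_gen_south p m.+1 x = 2 * x * sum_gen_south p m x.+1.
Proof.
move=> pm; rewrite /sum_gen_south (sum_tuple_rcons m (fun s => nth false s p * gen s x)).
rewrite big_distrr /=; apply: eq_bigr => v _.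
by rewrite !nth_rcons size_tuple pm -mulnDr gen_step; lia.
Qed.

Lemma sum_gen_south_last p x : sum_gen_south p p.+1 x = x * (2 ^ p * rising x p).
Proof.
rewrite /sum_gen_south (sum_tuple_rcons p (fun s => nth false s p * gen s x)).
rewrite -sum_gen big_distrr /=; apply: eq_bigr => v _.
by rewrite !nth_rcons size_tuple ltnn eqxx mul1n mul0n addn0 gen_south.
Qed.

Lemma sum_gen_southE p j x :
  sum_gen_south p (p.+1 + j) x = 2 ^ (p + j) * rising x (p + j) * (x + j).
Proof.
elim: j x => [|j IH] x; first by rewrite !addn0 sum_gen_south_last; nia.
rewrite addnS sum_gen_south_later ?IH; last by rewrite ltnS leq_addr.
rewrite addnS expnS rising_S (addnS x j); nia.
Qed.

Lemma sum_by_shape n (P : pred (tabT n)) :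
  \sum_(t | P t) 1 = \sum_(w : n.-tuple bool) \sum_(f | P (w, f)) 1.
Proof. by rewrite pair_big_dep /=; apply: eq_bigl => -[w f]. Qed.

Lemma card_tabB n : #|tabB n| = \sum_(w : n.-tuple bool) gen w 1.
Proof.
rewrite -sum1_card (sum_by_shape (fun t => t \in tabB n)).
apply: eq_bigr => w _; rewrite gen_tuple /genfun.
by apply: eq_big => [f|f _]; rewrite ?in_set ?exp1n.
Qed.

Lemma card_tabB_south n k : #|[set t in tabB n | S_event k t]| =
  \sum_(w : n.-tuple bool) nth false w k.-1 * gen w 1.
Proof.
rewrite -sum1_card (sum_by_shape (fun t => t \in [set t in tabB n | S_event k t])).
apply: eq_bigr => w _; rewrite gen_tuple /genfun.
case E : (nth false w k.-1); rewrite ?mul0n ?mul1n.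
  by apply: eq_big => [f|f _]; rewrite ?in_set ?exp1n //= /S_event /= E andbT.
by apply: big_pred0 => f; rewrite !in_set /S_event /= E andbF.
Qed.

Unset Implicit Arguments.
Local Open Scope ring_scope.
Import GRing.Theory Num.Theory.

(* With n = p + 1 + j and k = p + 1: |B_n| = 2^n n! and
   #{S_k} = 2^(n-1) (n-1)! (j+1), whose ratio is (1 - (k-1)/n) / 2. *)
Theorem mainTheorem3 (n k : nat) : (1 <= k <= n)%N ->
  probB (@S_event n k) = 2^-1 * (1 - (k%:R - 1) / n%:R).
Proof.
case/andP => k1 kn; rewrite /probB card_tabB_south card_tabB sum_gen rising1.
move: k1 kn; case: k => // p _ pn.
have [j -> {n pn}] : exists j, n = (p.+1 + j)%N by exists (n - p.+1)%N; lia.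
rewrite -/(sum_gen_south p (p.+1 + j) 1) sum_gen_southE rising1.
rewrite (addSn p j) factS expnS.
have : ((p + j)`!)%:R != 0 :> rat by rewrite pnatr_eq0 -lt0n fact_gt0.
move: ((p + j)`!) => F hF.
rewrite !(natrM, natrX, natrD) -(addn1 p) -(addn1 (p + j)) !natrD.
have h2 : (p%:R + j%:R + 1) != 0 :> rat by rewrite -natrD natr1 pnatr_eq0.
by field; rewrite h2 hF expf_neq0.
Qed.
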